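(* Let $G=(V,E)$ be a strongly biconnected directed graph, and let $G^{eb}$ be the undirected simple graph with vertex set $V$ in which distinct vertices $x,y$ are adjacent if and only if $x \overset{e}{\leftrightsquigarrow} y$. Then the $2$-edge-biconnected blocks of $G$ are exactly the vertex sets of the blocks (maximal biconnected subgraphs, where a single edge counts as a block) of $G^{eb}$ that have at least $2$ vertices. In particular, if $G$ has no b-bridges and $|V|\ge 2$, then $V$ is the unique $2$-edge-biconnected block of $G$.
   Context: All graphs are finite. A directed graph $H$ is strongly biconnected if $H$ is strongly connected and its underlying undirected graph is biconnected. A strongly biconnected component of a directed graph $H=(W,F)$ is a maximal vertex subset $C\subseteq W$ such that the induced subgraph $H[C]$ is strongly biconnected. For a strongly biconnected directed graph $G=(V,E)$ and an edge $b\in E$, $G\setminus\{b\}=(V,E\setminus\{b\})$. An edge $b$ of $G$ is a b-bridge if $G\setminus\{b\}$ is not strongly biconnected. For distinct $x,y\in V$, write $x \overset{e}{\leftrightsquigarrow} y$ if for every edge $b\in E$ there is a strongly biconnected component of $G\setminus\{b\}$ containing both $x$ and $y$. A $2$-edge-biconnected block of $G$ is a maximal vertex subset $U\subseteq V$ with $|U|>1$ such that $x \overset{e}{\leftrightsquigarrow} y$ for all distinct $x,y\in U$. *)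

(* A finite directed graph G = (V, E) is modelled by a
   finite type T of potential vertices, a vertex set V : {set T} and an edge
   set E : {set T * T} of ordered pairs (u, v) = edge u -> v (simple digraph). *)
From mathcomp Require Import all_boot.
Set Implicit Arguments. Unset Strict Implicit. Unset Printing Implicit Defensive.

Section Defs.
Variable T : finType.

Definition dedge (W : {set T}) (F : {set T * T}) : rel T :=
  fun u v => [&& u \in W, v \in W & (u, v) \in F].

Definition strongly_connected (W : {set T}) (F : {set T * T}) : bool :=
  [forall x in W, forall y in W, connect (dedge W F) x y].

Definition uedge (W : {set T}) (r : rel T) : rel T :=
  fun u v => [&& u \in W, v \in W & r u v || r v u].

Definition uconnected (W : {set T}) (r : rel T) : bool :=
  [forall x in W, forall y in W, connect (uedge W r) x y].

(* Biconnected: connected and without cut vertex (removing any single vertex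
   leaves a connected graph).  K_1 and K_2 are biconnected. *)
Definition ubiconnected (W : {set T}) (r : rel T) : bool :=
  uconnected W r && [forall v in W, uconnected (W :\ v) r].

Definition under (F : {set T * T}) : rel T := fun u v => ((u, v) \in F) || ((v, u) \in F).

Definition strongly_biconnected (W : {set T}) (F : {set T * T}) : bool :=
  strongly_connected W F && ubiconnected W (under F).

Definition sbc (W : {set T}) (F : {set T * T}) (C : {set T}) : bool :=
  [&& C \subset W, strongly_biconnected C F &
      [forall D : {set T},
         [&& C \subset D, D \subset W & strongly_biconnected D F] ==> (D == C)]].

Definition bbridge (V : {set T}) (E : {set T * T}) (b : T * T) : bool :=
  (b \in E) && ~~ strongly_biconnected V (E :\ b).

Definition eb_rel (V : {set T}) (E : {set T * T}) (x y : T) : bool :=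
  (x != y) &&
  [forall b in E, exists C : {set T}, [&& sbc V (E :\ b) C, x \in C & y \in C]].

Definition eb_pairwise (V : {set T}) (E : {set T * T}) (U : {set T}) : bool :=
  [forall x in U, forall y in U, (x != y) ==> eb_rel V E x y].

Definition two_eb_block (V : {set T}) (E : {set T * T}) (U : {set T}) : bool :=
  [&& U \subset V, 1 < #|U|, eb_pairwise V E U &
      [forall D : {set T},
         [&& U \subset D, D \subset V, 1 < #|D| & eb_pairwise V E D] ==> (D == U)]].

Definition geb (V : {set T}) (E : {set T * T}) : rel T :=
  fun x y => [&& x \in V, y \in V & eb_rel V E x y].

Definition ublock (V : {set T}) (r : rel T) (B : {set T}) : bool :=
  [&& B \subset V, ubiconnected B r &
      [forall D : {set T},
         [&& B \subset D, D \subset V & ubiconnected D r] ==> (D == B)]].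

End Defs.

From mathcomp Require Import all_boot.
Set Implicit Arguments. Unset Strict Implicit. Unset Printing Implicit Defensive.

(* The statement is really about two families of vertex sets D ⊆ V:
   the sets that are pairwise 2-edge-biconnected ([eb_pairwise]) and the sets
   inducing a biconnected subgraph of G^eb.  We show that these families
   COINCIDE; the 2-edge-biconnected blocks and the blocks of G^eb with at least
   two vertices are then the maximal members of the same family.
   - A pairwise set is a clique of G^eb, and cliques are biconnected.
   - Conversely, let D be biconnected in G^eb and b an edge.  Every G^eb-edge
     x y of D lies in some strongly biconnected C(x,y) of G \ {b}.  Gluing D
     with all these pieces gives a strongly biconnected set: strong
     connectivity (and, after deleting any vertex v, undirected connectivity)
     propagates along the connected "core" D (resp. D \ v) through the pieces.
     A maximal strongly biconnected set containing the union is an SBC of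
     G \ {b} containing all of D.
   Without b-bridges, V itself is the SBC of every G \ {b}, so V is pairwise
   and is the unique 2-edge-biconnected block. *)

Section Connectivity.
Variable T : finType.
Implicit Types (W A C : {set T}) (F : {set T * T}) (e r : rel T).

Lemma forall2_inP W (P : T -> T -> bool) :
  reflect (forall x y, x \in W -> y \in W -> P x y)
          [forall x in W, forall y in W, P x y].
Proof.
apply: (iffP forallP) => [H x y Hx Hy | H x].
  by move/implyP: (H x) => /(_ Hx) /forallP /(_ y) /implyP; apply.
by apply/implyP => Hx; apply/forallP => y; apply/implyP => Hy; apply: H.
Qed.

Lemma dedge_connect_sub W W' F x y : W \subset W' ->
  connect (dedge W F) x y -> connect (dedge W' F) x y.
Proof.
move=> sWW'; apply: connect_sub => u v /and3P[Hu Hv Huv].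
by apply: connect1; rewrite /dedge (subsetP sWW' _ Hu) (subsetP sWW' _ Hv).
Qed.

Lemma uedge_connect_sub W W' r x y : W \subset W' ->
  connect (uedge W r) x y -> connect (uedge W' r) x y.
Proof.
move=> sWW'; apply: connect_sub => u v /and3P[Hu Hv Huv].
by apply: connect1; rewrite /uedge (subsetP sWW' _ Hu) (subsetP sWW' _ Hv).
Qed.

Lemma strongly_connected_sub W C F x y : C \subset W ->
  strongly_connected C F -> x \in C -> y \in C -> connect (dedge W F) x y.
Proof.
by move=> sCW /forall2_inP scC Hx Hy; apply: dedge_connect_sub sCW (scC x y Hx Hy).
Qed.

Lemma uconnected_sub W C r x y : C \subset W ->
  uconnected C r -> x \in C -> y \in C -> connect (uedge W r) x y.
Proof.
by move=> sCW /forall2_inP cC Hx Hy; apply: uedge_connect_sub sCW (cC x y Hx Hy).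
Qed.

Lemma strongly_connected_uconnected W F :
  strongly_connected W F -> uconnected W (under F).
Proof.
move/forall2_inP => scW; apply/forall2_inP => x y Hx Hy.
apply: connect_sub (scW x y Hx Hy) => u v /and3P[Hu Hv Huv].
by apply: connect1; rewrite /uedge Hu Hv /under Huv.
Qed.

Lemma ubiconnected_delete W r v : ubiconnected W r -> uconnected (W :\ v) r.
Proof.
case/andP=> cW /forallP /(_ v) /implyP cWv; case Hv: (v \in W); first exact: cWv.
suff -> : W :\ v = W by [].
by apply/setP => u; rewrite !inE; case: eqP => // ->; rewrite Hv.
Qed.

Lemma connect_glue e s A W :
  uconnected A s ->
  (forall a b, a \in A -> b \in A -> s a b -> connect e a b && connect e b a) ->
  (forall u, u \in W -> exists2 a, a \in A & connect e a u && connect e u a) ->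
  [forall x in W, forall y in W, connect e x y].
Proof.
move=> /forall2_inP cA se_edge W_core.
have core_conn a b : a \in A -> b \in A -> connect e a b.
  move=> Ha Hb; apply: connect_sub (cA a b Ha Hb) => u w /and3P[Hu Hw /orP[] Huw].
  - by case/andP: (se_edge u w Hu Hw Huw).
  - by case/andP: (se_edge w u Hw Hu Huw).
apply/forall2_inP => x y /W_core[a Ha /andP[_ Hxa]] /W_core[b Hb /andP[Hby _]].
exact: connect_trans Hxa (connect_trans (core_conn a b Ha Hb) Hby).
Qed.

End Connectivity.

Section Gluing.
Variable T : finType.
Variables (F : {set T * T}) (s : rel T) (C : T -> T -> {set T}) (D : {set T}).
Hypothesis piece : forall x y, s x y ->
  [&& strongly_biconnected (C x y) F, x \in C x y & y \in C x y].
Hypothesis s_irr : irreflexive s.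
Hypothesis D_bicon : ubiconnected D s.

Definition glue : {set T} :=
  D :|: \bigcup_(p | [&& s p.1 p.2, p.1 \in D & p.2 \in D]) C p.1 p.2.

Lemma glueP u : u \in glue ->
  u \in D \/ exists x y, [/\ s x y, x \in D, y \in D & u \in C x y].
Proof.
rewrite inE => /orP[-> | /bigcupP[[x y] /= /and3P[Hxy Hx Hy] Hu]]; first by left.
by right; exists x, y.
Qed.

Lemma core_sub_glue : D \subset glue.
Proof. by apply/subsetP => u Hu; rewrite inE Hu. Qed.

Lemma piece_sub_glue x y : s x y -> x \in D -> y \in D -> C x y \subset glue.
Proof.
move=> Hxy Hx Hy; apply/subsetP => u Hu; rewrite inE; apply/orP; right.
by apply/bigcupP; exists (x, y) => //=; rewrite Hxy Hx Hy.
Qed.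

Lemma glue_strongly_connected : strongly_connected glue F.
Proof.
have piece_conn x y a b : s x y -> x \in D -> y \in D -> a \in C x y ->
    b \in C x y -> connect (dedge glue F) a b && connect (dedge glue F) b a.
  move=> Hxy Hx Hy Ha Hb; have /and3P[/andP[scC _] _ _] := piece Hxy.
  by apply/andP; split; apply: strongly_connected_sub (piece_sub_glue Hxy Hx Hy) scC _ _.
apply: (connect_glue (A := D) (s := s)); first by case/andP: D_bicon.
  move=> a b Ha Hb Hab; have /and3P[_ Ha' Hb'] := piece Hab.
  exact: (piece_conn a b).
move=> u /glueP[Hu | [x [y [Hxy Hx Hy Hu]]]]; first by exists u; rewrite ?connect0.
have /and3P[_ Hx' _] := piece Hxy.
by exists x => //; apply: (piece_conn x y).
Qed.

(* Deleting v leaves each piece C x y connected, and every remaining vertex of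
   a piece is still linked to an endpoint x or y different from v. *)
Lemma glue_delete_uconnected v : uconnected (glue :\ v) (under F).
Proof.
have piece_conn x y a b : s x y -> x \in D -> y \in D -> a \in C x y :\ v ->
    b \in C x y :\ v ->
    connect (uedge (glue :\ v) (under F)) a b && connect (uedge (glue :\ v) (under F)) b a.
  move=> Hxy Hx Hy Ha Hb; have /and3P[/andP[_ bC] _ _] := piece Hxy.
  have sub := setSD [set v] (piece_sub_glue Hxy Hx Hy).
  by apply/andP; split; apply: uconnected_sub sub (ubiconnected_delete v bC) _ _.
apply: (connect_glue (A := D :\ v) (s := s)); first exact: ubiconnected_delete.
  move=> a b /setD1P[Hav Ha] /setD1P[Hbv Hb] Hab.
  have /and3P[_ Ha' Hb'] := piece Hab.
  by apply: (piece_conn a b); rewrite ?in_setD1 ?Hav ?Hbv.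
move=> u /setD1P[Huv /glueP[Hu | [x [y [Hxy Hx Hy Hu]]]]].
  by exists u; rewrite ?in_setD1 ?Huv ?Hu ?connect0.
have /and3P[_ Hx' Hy'] := piece Hxy.
have HuC : u \in C x y :\ v by rewrite in_setD1 Huv.
have [Exv | Hxv] := eqVneq x v.
  have Hyv : y != v by apply: contraTneq Hxy => Eyv; rewrite Exv Eyv s_irr.
  by exists y; [rewrite in_setD1 Hyv | apply: (piece_conn x y) => //; rewrite in_setD1 Hyv].
by exists x; [rewrite in_setD1 Hxv | apply: (piece_conn x y) => //; rewrite in_setD1 Hxv].
Qed.

Lemma glue_strongly_biconnected : strongly_biconnected glue F.
Proof.
rewrite /strongly_biconnected /ubiconnected glue_strongly_connected.
rewrite strongly_connected_uconnected ?glue_strongly_connected //=.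
by apply/forallP => v; apply/implyP => _; apply: glue_delete_uconnected.
Qed.

End Gluing.

Section Blocks.
Variable T : finType.
Implicit Types (V U D W : {set T}) (E F : {set T * T}).

(* Every strongly biconnected U ⊆ V lies in a strongly biconnected component
   of (V, F): take a largest strongly biconnected superset inside V. *)
Lemma sbc_exists V F U : U \subset V -> strongly_biconnected U F ->
  exists M, sbc V F M && (U \subset M).
Proof.
move=> sUV sbU.
pose P (M : {set T}) := [&& U \subset M, M \subset V & strongly_biconnected M F].
have PU : P U by rewrite /P subxx sUV sbU.
case: (@arg_maxnP _ U P (fun M => #|M|) PU) => M /and3P[sUM sMV sbM] M_max.
exists M; rewrite sUM andbT /sbc sMV sbM /=.
apply/forallP => D; apply/implyP => /and3P[sMD sDV sbD].
have PD : P D by rewrite /P (subset_trans sUM sMD) sDV sbD.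
by rewrite eq_sym eqEcard sMD; apply: M_max.
Qed.

Lemma geb_irr V E : irreflexive (geb V E).
Proof. by move=> x; rewrite /geb /eb_rel eqxx /= !andbF. Qed.

Lemma geb_bicon_in_sbc V E b D : b \in E -> D \subset V ->
  ubiconnected D (geb V E) -> exists M, sbc V (E :\ b) M && (D \subset M).
Proof.
move=> Eb sDV bD.
pose C x y := odflt set0 [pick M | [&& sbc V (E :\ b) M, x \in M & y \in M]].
have C_sbc x y : geb V E x y -> [&& sbc V (E :\ b) (C x y), x \in C x y & y \in C x y].
  case/and3P => _ _ /andP[_ /forallP /(_ b) /implyP /(_ Eb) /existsP[M HM]].
  by rewrite /C; case: pickP => [M' -> // | /(_ M)]; rewrite HM.
have piece x y : geb V E x y ->
    [&& strongly_biconnected (C x y) (E :\ b), x \in C x y & y \in C x y].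
  by move/C_sbc => /and3P[/and3P[_ -> _] -> ->].
have sGV : glue (geb V E) C D \subset V.
  apply/subsetP => u /glueP[Hu | [x [y [Hxy _ _ Hu]]]]; first exact: (subsetP sDV).
  by case/and3P: (C_sbc _ _ Hxy) => /and3P[/subsetP sCV _ _] _ _; apply: sCV.
have [M /andP[sbcM sGM]] := sbc_exists sGV (glue_strongly_biconnected piece (@geb_irr V E) bD).
by exists M; rewrite sbcM (subset_trans (core_sub_glue _ _ _) sGM).
Qed.

Lemma eb_pairwise_ubiconnected V E D : D \subset V ->
  eb_pairwise V E D = ubiconnected D (geb V E).
Proof.
move=> sDV; apply/idP/idP => [/forall2_inP pwD | bD].
  have clique_uconn W : W \subset D -> uconnected W (geb V E).
    move=> /subsetP sWD; apply/forall2_inP => x y Hx Hy.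
    have [-> | nxy] := eqVneq x y; first exact: connect0.
    apply: connect1; rewrite /uedge Hx Hy /geb !(subsetP sDV) ?sWD //.
    by rewrite (implyP (pwD x y (sWD x Hx) (sWD y Hy)) nxy).
  rewrite /ubiconnected clique_uconn //=.
  by apply/forallP => v; apply/implyP => _; apply/clique_uconn/subD1set.
apply/forall2_inP => x y Hx Hy; apply/implyP => nxy.
rewrite /eb_rel nxy /=; apply/forallP => b; apply/implyP => Eb.
have [M /andP[sbcM /subsetP sDM]] := geb_bicon_in_sbc Eb sDV bD.
by apply/existsP; exists M; rewrite sbcM !sDM.
Qed.

Lemma two_eb_block_ublock V E U :
  two_eb_block V E U <-> ublock V (geb V E) U /\ 1 < #|U|.
Proof.
split.
  case/and4P => sUV U2 pwU /forallP U_max; split => //.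
  rewrite /ublock sUV -(eb_pairwise_ubiconnected _ sUV) pwU /=.
  apply/forallP => D; apply/implyP => /and3P[sUD sDV bD].
  apply: (implyP (U_max D)); rewrite sUD sDV eb_pairwise_ubiconnected // bD andbT.
  exact: leq_trans U2 (subset_leq_card sUD).
case => /and3P[sUV bU /forallP U_max] U2.
rewrite /two_eb_block sUV U2 (eb_pairwise_ubiconnected _ sUV) bU /=.
apply/forallP => D; apply/implyP => /and4P[sUD sDV _ pwD].
by apply: (implyP (U_max D)); rewrite sUD sDV -eb_pairwise_ubiconnected.
Qed.

(* Without b-bridges, V is strongly biconnected after removing any edge, so it
   is the (unique) strongly biconnected component of each G \ {b}. *)
Lemma no_bbridge_pairwise V E :
  (forall b, ~~ bbridge V E b) -> eb_pairwise V E V.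
Proof.
move=> no_bridge; apply/forall2_inP => x y Hx Hy; apply/implyP => nxy.
rewrite /eb_rel nxy /=; apply/forallP => b; apply/implyP => Eb.
have sbV : strongly_biconnected V (E :\ b).
  by move: (no_bridge b); rewrite /bbridge Eb negbK.
apply/existsP; exists V; rewrite Hx Hy !andbT /sbc subxx sbV /=.
by apply/forallP => D; apply/implyP => /and3P[sVD sDV _]; rewrite eqEsubset sDV sVD.
Qed.

Lemma two_eb_block_full V E U : eb_pairwise V E V -> 1 < #|V| ->
  two_eb_block V E U <-> U = V.
Proof.
move=> pwV V2; split.
  case/and4P => sUV _ _ /forallP U_max.
  by apply/esym/eqP; apply: (implyP (U_max V)); rewrite sUV subxx V2 pwV.
move->; rewrite /two_eb_block subxx V2 pwV /=.
by apply/forallP => D; apply/implyP => /and4P[sVD sDV _ _]; rewrite eqEsubset sDV sVD.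
Qed.

End Blocks.

Theorem mainTheorem4 (T : finType) (V : {set T}) (E : {set T * T}) :
  E \subset setX V V ->
  strongly_biconnected V E ->
  (forall U : {set T},
     two_eb_block V E U <-> (ublock V (geb V E) U /\ 1 < #|U|)) /\
  ((forall b, ~~ bbridge V E b) -> 1 < #|V| ->
     forall U : {set T}, two_eb_block V E U <-> U = V).
Proof.
move=> _ _; split; first exact: two_eb_block_ublock.
by move=> no_bridge V2 U; apply/two_eb_block_full/V2/no_bbridge_pairwise.
Qed.
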